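(* Let $n,m,\ell$ be integers with $n-1\ge m\ge \ell\ge 0$. Then $$\mathcal Y_n\big(2^{\{m-\ell\}},1^{\{\ell\}}\big)+n\sum_{j=0}^{n-m-2}\mathcal Y_n\big(3^{\{m-\ell+1+j\}},2^{\{\ell-1-j\}},1^{\{n-m-2-j\}}\big)=\frac{1}{n(m+1)}\left(\binom{n-1}{m}+(-1)^m\binom{n-1}{2m+1}\right)\binom{n}{\ell}.$$
   Context: Let $\zeta_n=e^{2\pi\sqrt{-1}/n}$. For positive integers $s_1,\dots,s_m$, define $\mathfrak Z_n(s_1,\dots,s_m):=\sum_{1\le i_1<\cdots<i_m\le n-1}\prod_{k=1}^{m}(1-\zeta_n^{i_k})^{-s_k}$ (equal to $1$ if $m=0$ and to $0$ if $m>n-1$). Define $\mathcal Y_n(s_1,\dots,s_m):=\sum_{\sigma}\mathfrak Z_n(\sigma)$, where $\sigma$ runs over all distinct rearrangements of $(s_1,\dots,s_m)$; $\mathcal Y_n$ of the empty sequence is $1$. Notation: $a^{\{k\}}$ denotes the block $a,\dots,a$ of length $k$; any $\mathcal Y_n$ term in which some block has negative length is interpreted as $0$. Binomial coefficients $\binom{a}{b}$ are $0$ when $b<0$ or $b>a\ge0$. *)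

From HB Require Import structures.
From mathcomp Require Import all_boot all_order all_algebra.
From mathcomp Require Import complex.
From mathcomp Require Import all_classical all_reals all_analysis.
Set Implicit Arguments. Unset Strict Implicit. Unset Printing Implicit Defensive.
Import Order.TTheory GRing.Theory Num.Theory.
Local Open Scope ring_scope.

Section Defs.
Variable R : realType.

Definition zeta (n : nat) : R[i] :=
  (cos (2 * pi / n%:R) +i* sin (2 * pi / n%:R))%C.

(* Zaux n s lo = sum over lo <= i_1 < ... < i_m <= n-1 of
   prod_k (1 - zeta^{i_k})^{-s_k} *)
Fixpoint Zaux (n : nat) (s : seq nat) (lo : nat) : R[i] :=
  match s with
  | [::] => 1
  | a :: t => \sum_(lo <= i < n) (1 - zeta n ^+ i) ^- a * Zaux n t i.+1
  end.

Definition frakZ (n : nat) (s : seq nat) : R[i] := Zaux n s 1.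

(* \mathcal Y_n(s): sum over all distinct rearrangements of s *)
Definition calY (n : nat) (s : seq nat) : R[i] :=
  \sum_(t <- permutations s) frakZ n t.

(* \mathcal Y_n of a concatenation of blocks a^{k} given as pairs (a, k)
   with integer lengths k; 0 if some block has negative length. *)
Definition calYb (n : nat) (bl : seq (nat * int)) : R[i] :=
  if all (fun p => 0 <= p.2) bl
  then calY n (flatten [seq nseq `|p.2|%N p.1 | p <- bl])
  else 0.
End Defs.

From HB Require Import structures.
From mathcomp Require Import all_boot all_order all_algebra.
From mathcomp Require Import complex.
From mathcomp Require Import all_classical all_reals all_analysis.
From mathcomp Require Import zify ring lra.
Import Order.TTheory GRing.Theory Num.Theory.
Local Open Scope ring_scope.
Set Implicit Arguments. Unset Strict Implicit. Unset Printing Implicit Defensive.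

(* Put x_i = (1 - zeta^i)^-1, so that Y_n(3^r, 2^p, 1^q) is the sum, over
   disjoint sets of indices of sizes r, p, q in [1, n-1], of the products of
   x_i^3, x_i^2 and x_i over the three sets.  Expanding e_k(x) e_m(x^2) by the
   size r of the overlap of the two index sets gives
     e_k(x) e_m(x^2) = sum_r Y_n(3^r, 2^(m-r), 1^(k-r)).
   For k = n-1-l, the terms with r < m-l need more than n-1 indices and vanish,
   the term r = m-l uses every index, hence equals
   (prod_i x_i) Y_n(2^(m-l), 1^l) = Y_n(2^(m-l), 1^l) / n, and the other terms
   form the sum of the theorem.  Both factors are explicit: since
   prod_i (X + 1 - zeta^i) = ((X + 1)^n - 1) / X, we get
   P(X) := prod_i (1 + x_i X) = ((1 + X)^n - 1) / (n X), and
   prod_i (1 - x_i^2 X^2) = P(X) P(-X) then yields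
   e_m(x^2) = (C(n, m+1) + 2 (-1)^m C(n, 2m+2)) / n^2. *)

Section MultipleSums.
Variables (C : comNzRingType) (x : nat -> C) (n : nat).

Fixpoint zsum (s : seq nat) (lo : nat) : C :=
  if s is a :: t then \sum_(lo <= i < n) x i ^+ a * zsum t i.+1 else 1.

Definition ysum (lo : nat) (s : seq nat) : C :=
  \sum_(t <- permutations s) zsum t lo.

Lemma ysum_nil lo : ysum lo [::] = 1.
Proof. by rewrite /ysum /permutations /= big_seq1. Qed.

Lemma zsum_oversize s lo : (n - lo < size s)%N -> zsum s lo = 0.
Proof.
elim: s lo => [|a s IHs] lo //= ltns.
by rewrite big_nat big1 // => i /andP[? ?]; rewrite IHs ?mulr0 //; lia.
Qed.

Lemma ysum_oversize s lo : (n - lo < size s)%N -> ysum lo s = 0.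
Proof.
move=> ltns; rewrite /ysum big_seq big1 // => t.
by rewrite mem_permutations => /perm_size eq_size; rewrite zsum_oversize ?eq_size.
Qed.

Lemma ysum_first lo s : (lo < n)%N -> s != [::] ->
  ysum lo s = ysum lo.+1 s + \sum_(a <- undup s) x lo ^+ a * ysum lo.+1 (rem a s).
Proof.
move=> lt_lo_n s_nil; have s_gt0 : (0 < size s)%N by case: s s_nil.
rewrite /ysum !(perm_big _ (permutationsE s_gt0)) !big_allpairs_dep -big_split.
apply: eq_bigr => a _; rewrite big_distrr -big_split; apply: eq_bigr => t _ /=.
by rewrite big_ltn // addrC.
Qed.

End MultipleSums.

Definition blocks (q p r : nat) : seq nat := nseq r 3%N ++ nseq p 2%N ++ nseq q 1%N.

Lemma size_blocks q p r : size (blocks q p r) = (q + p + r)%N.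
Proof. by rewrite !size_cat !size_nseq; lia. Qed.

Lemma rem_nseq_neq (a b k : nat) (t : seq nat) : a != b ->
  rem a (nseq k b ++ t) = nseq k b ++ rem a t.
Proof. by move=> neq_ab; elim: k => //= k ->; rewrite eq_sym (negbTE neq_ab). Qed.

Lemma rem_blocks1 q p r : rem 1%N (blocks q.+1 p r) = blocks q p r.
Proof. by rewrite /blocks !rem_nseq_neq //= eqxx. Qed.

Lemma rem_blocks2 q p r : rem 2%N (blocks q p.+1 r) = blocks q p r.
Proof. by rewrite /blocks rem_nseq_neq //= eqxx. Qed.

Lemma rem_blocks3 q p r : rem 3%N (blocks q p r.+1) = blocks q p r.
Proof. by []. Qed.

Lemma big_undup_blocks (C : nmodType) (F : nat -> C) q p r :
  \sum_(a <- undup (blocks q p r)) F a =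
  (if q is _.+1 then F 1%N else 0) + (if p is _.+1 then F 2%N else 0)
  + (if r is _.+1 then F 3%N else 0).
Proof.
have mem_blocks a : a \in blocks q p r = [|| (0 < r)%N && (a == 3%N),
    (0 < p)%N && (a == 2%N) | (0 < q)%N && (a == 1%N)].
  by rewrite /blocks !mem_cat !mem_nseq.
have undupE : perm_eq (undup (blocks q p r)) [seq a <- [:: 1; 2; 3]%N | a \in blocks q p r].
  apply: uniq_perm; rewrite ?undup_uniq ?filter_uniq // => a.
  rewrite mem_undup mem_filter andb_idr // mem_blocks !inE.
  by case/or3P=> /andP[_ ->]; rewrite ?orbT.
rewrite (perm_big _ undupE) big_filter big_mkcond !big_cons big_nil !mem_blocks /=.
rewrite !andbF !andbT !orbF /= addr0 addrA.
by case: q p r {mem_blocks undupE} => [|q] [|p] [|r].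
Qed.

Section BlockSums.
Variables (C : comNzRingType) (x : nat -> C) (n : nat).

Lemma ysum_blocks_first lo q p r : (lo < n)%N -> (0 < q + p + r)%N ->
  ysum x n lo (blocks q p r) = ysum x n lo.+1 (blocks q p r)
   + (if q is q'.+1 then x lo * ysum x n lo.+1 (blocks q' p r) else 0)
   + (if p is p'.+1 then x lo ^+ 2 * ysum x n lo.+1 (blocks q p' r) else 0)
   + (if r is r'.+1 then x lo ^+ 3 * ysum x n lo.+1 (blocks q p r') else 0).
Proof.
move=> lt_lo_n qpr_gt0; rewrite ysum_first // -?size_eq0 ?size_blocks -?lt0n //.
rewrite big_undup_blocks -!addrA.
by case: q {qpr_gt0} => [|q]; case: p => [|p]; case: r => [|r];
  rewrite ?rem_blocks1 ?rem_blocks2 ?rem_blocks3 ?expr1.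
Qed.

Definition ysum3 lo (q p r : int) : C :=
  if (q, p, r) is (Posz a, Posz b, Posz c) then ysum x n lo (blocks a b c) else 0.

Lemma ysum3E lo (a b c : nat) : ysum3 lo a b c = ysum x n lo (blocks a b c).
Proof. by []. Qed.

Lemma ysum3_neg lo q p r : (q < 0) || (p < 0) || (r < 0) -> ysum3 lo q p r = 0.
Proof. by case: q p r => [a|a] [b|b] [c|c]. Qed.

Lemma ysum3_first lo q p r : (lo < n)%N ->
  ysum3 lo q p r = ysum3 lo.+1 q p r + x lo * ysum3 lo.+1 (q - 1) p r
    + x lo ^+ 2 * ysum3 lo.+1 q (p - 1) r + x lo ^+ 3 * ysum3 lo.+1 q p (r - 1).
Proof.
move=> lt_lo_n; have succ_subz1 (a : nat) : a.+1%:Z - 1 = a by lia.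
case: q p r => [a|a] [b|b] [c|c]; try by rewrite !ysum3_neg ?mulr0 ?addr0 //; lia.
have [qpr0|qpr_gt0] := posnP (a + b + c).
  have [-> -> ->] : [/\ a = 0, b = 0 & c = 0]%N by split; lia.
  by rewrite /ysum3 /= !ysum_nil !mulr0 !addr0.
rewrite !ysum3E ysum_blocks_first //.
by case: a {qpr_gt0} => [|a]; case: b => [|b]; case: c => [|c];
  rewrite ?succ_subz1 ?ysum3E ?ysum3_neg ?mulr0 ?addr0.
Qed.

Lemma ysum3_oversize lo q p r : (n - lo)%:Z < q + p + r -> ysum3 lo q p r = 0.
Proof.
case: q p r => [a|a] [b|b] [c|c] //= lt_n_qpr.
by rewrite ysum3E ysum_oversize // size_blocks; lia.
Qed.

Lemma ysum3_end q p r : ysum3 n q p r = ((q == 0) && (p == 0) && (r == 0))%:R.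
Proof.
case: q p r => [[|a]|a] [[|b]|b] [[|c]|c] //=; rewrite ysum3E.
  exact: ysum_nil.
all: by rewrite ysum_oversize ?subnn ?size_blocks.
Qed.

End BlockSums.

Section ElementarySymmetric.
Variables (C : comNzRingType) (n : nat).

Definition esym_gen (f : nat -> C) lo : {poly C} := \prod_(lo <= i < n) (1 + f i *: 'X).

Definition esym f lo (k : int) : C := if k is Posz a then (esym_gen f lo)`_a else 0.

Lemma esym_neg f lo k : k < 0 -> esym f lo k = 0.
Proof. by case: k. Qed.

Lemma esym_end f k : esym f n k = (k == 0)%:R.
Proof. by rewrite /esym /esym_gen big_geq //; case: k => [[|a]|a]; rewrite ?coef1. Qed.

Lemma esym_first f lo k : (lo < n)%N ->
  esym f lo k = esym f lo.+1 k + f lo * esym f lo.+1 (k - 1).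
Proof.
move=> lt_lo_n; rewrite /esym /esym_gen big_ltn // mulrDl mul1r -scalerAl.
case: k => [a|a]; last by rewrite mulr0 addr0.
rewrite coefD coefZ coefXM; case: a => [|a]; first by rewrite mulr0.
by have -> : a.+1%:Z - 1 = a by lia.
Qed.

Variable x : nat -> C.

Lemma esymM_sqr lo (k m : int) K : (lo <= n)%N -> k < K%:Z ->
  esym x lo k * esym (fun i => x i ^+ 2) lo m
  = \sum_(r < K) ysum3 x n lo (k - r%:Z) (m - r%:Z) r%:Z.
Proof.
move/subnK; move: (n - lo)%N => d.
elim: d lo k m K => [|d IHd] lo k m K d_lo ltkK;
  case: K ltkK => [|K] ltkK; try by rewrite esym_neg ?mul0r ?big_ord0 //; lia.
  rewrite add0n in d_lo; subst lo.
  rewrite big_ord_recl big1 => [|r _]; last by rewrite ysum3_end andbF.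
  by rewrite !esym_end ysum3_end !subr0 addr0 -natrM mulnb andbT.
have lt_lo_n : (lo < n)%N by lia.
rewrite (esym_first _ k lt_lo_n) (esym_first _ m lt_lo_n).
under eq_bigr do rewrite ysum3_first // ![_ - _ - 1]addrAC.
rewrite !big_split /= -!big_distrr /= -!IHd; try lia.
rewrite big_ord_recl ysum3_neg ?orbT // add0r.
have shift (a : int) (i : 'I_K) : a - (bump 0 i)%:Z = a - 1 - i%:Z by rewrite /bump; lia.
have bump0K (i : 'I_K) : (bump 0 i)%:Z - 1 = i by rewrite /bump; lia.
under eq_bigr do rewrite !shift bump0K.
rewrite -IHd; [ring | lia | lia].
Qed.

Lemma ysum3_full lo (q p r : int) : (lo <= n)%N -> q + p + r = (n - lo)%N ->
  ysum3 x n lo q p r = (\prod_(lo <= i < n) x i) * ysum3 x n lo p r 0.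
Proof.
move/subnK; move: (n - lo)%N => d; elim: d lo q p r => [|d IHd] lo q p r d_lo qpr_d.
  rewrite add0n in d_lo; subst lo; rewrite big_geq // mul1r !ysum3_end eqxx andbT.
  by congr ((nat_of_bool _)%:R); apply/idP/idP; lia.
have lt_lo_n : (lo < n)%N by lia.
rewrite (ysum3_first _ q) // (ysum3_first _ p) // big_ltn // ysum3_oversize; last by lia.
rewrite [ysum3 _ _ _ _ _ (0 - 1)]ysum3_neg ?orbT //.
rewrite (IHd _ (q - 1) p r) ?(IHd _ q (p - 1) r) ?(IHd _ q p (r - 1)); try lia.
by ring.
Qed.

End ElementarySymmetric.

Lemma esymM_sqr_split (C : comNzRingType) (x : nat -> C) (n l m : nat) : (l <= m < n)%N ->
  esym n x 1 (n - 1 - l)%N * esym n (fun i => x i ^+ 2) 1 m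
  = (\prod_(1 <= i < n) x i) * ysum3 x n 1 l (m%:Z - l%:Z) 0
    + \sum_(0 <= j < n - m - 1)
        ysum3 x n 1 (n%:Z - m%:Z - 2 - j%:Z) (l%:Z - 1 - j%:Z) (m%:Z - l%:Z + 1 + j%:Z).
Proof.
case/andP=> le_lm lt_mn; rewrite (@esymM_sqr _ _ _ _ _ _ (n - l)); [|lia|lia].
rewrite -(big_mkord xpredT (fun r => ysum3 x n 1 ((n - 1 - l)%N%:Z - r%:Z) (m%:Z - r%:Z) r%:Z))
  (big_cat_nat _ (n := (m - l)%N)) //=; last by lia.
rewrite big_nat big1 ?add0r => [|r lt_r]; last by apply: ysum3_oversize; lia.
rewrite big_ltn; last by lia.
rewrite ysum3_full; [|lia|lia]; congr (_ * ysum3 _ _ _ _ _ _ + _); try lia.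
rewrite -[((m - l).+1)%N]add0n big_addn (_ : n - l - (m - l).+1 = n - m - 1)%N; last by lia.
by apply: eq_bigr => j _; congr ysum3; lia.
Qed.

Section PolyFacts.
Variable C : comNzRingType.

Lemma coef_scaleXD1_exp (c : C) k j : ((c *: 'X + 1) ^+ k)`_j = c ^+ j * 'C(k, j)%:R.
Proof.
elim: k j => [|k IHk] j.
  by rewrite expr0 coef1; case: j => [|j]; rewrite ?mulr1 ?mulr0.
rewrite exprSr mulrDr mulr1 -scalerAr coefD coefZ coefMX.
case: j => [|j] /=; first by rewrite mulr0 add0r IHk !bin0.
by rewrite !IHk binS natrD exprS; ring.
Qed.

Lemma coef_XD1_exp k j : (('X + 1 : {poly C}) ^+ k)`_j = 'C(k, j)%:R.
Proof. by rewrite -[X in X + 1]scale1r coef_scaleXD1_exp expr1n mul1r. Qed.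

Lemma coef_comp_scaleX (c : C) p i : (p \Po (c *: 'X))`_i = c ^+ i * p`_i.
Proof.
rewrite comp_polyE; under eq_bigr do rewrite exprZn scalerA.
rewrite coef_sumMXn /= (big_ord1_eq _ (fun j => p`_j * c ^+ j)).
by case: ltnP => [_|le_p_i]; [rewrite mulrC | rewrite nth_default ?mulr0].
Qed.

Lemma esym_gen_sqr_comp n (f : nat -> C) lo :
  esym_gen n (fun i => f i ^+ 2) lo \Po (- 'X ^+ 2)
  = esym_gen n f lo * (esym_gen n f lo \Po ((-1) *: 'X)).
Proof.
rewrite /esym_gen !rmorph_prod -big_split /=; apply: eq_bigr => i _.
rewrite !comp_polyD !comp_polyC !comp_polyZ !comp_polyX -!mul_polyC polyC_exp polyCN.
by ring.
Qed.

End PolyFacts.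

Section PrimitiveRoot.
Variables (C : fieldType) (n : nat) (z : C).
Hypothesis prim_z : n.-primitive_root z.

Let n_gt0 : (0 < n)%N := prim_order_gt0 prim_z.
Let n_neq0 : n%:R != 0 :> C := prim_root_natf_neq0 prim_z.

Lemma one_sub_prim_expr_neq0 i : (0 < i < n)%N -> 1 - z ^+ i != 0.
Proof.
by case/andP=> i_gt0 lt_i_n; rewrite subr_eq0 eq_sym -(prim_order_dvd prim_z) gtnNdvd.
Qed.

Lemma factor_XD1n_sub_1 :
  'X * \prod_(1 <= i < n) ('X + (1 - z ^+ i)%:P) = ('X + 1) ^+ n - 1.
Proof.
have := congr1 (comp_poly ('X + 1)) (factor_Xn_sub_1 prim_z).
rewrite rmorphB rmorph1 /= comp_Xn_poly rmorph_prod big_ltn //= => <-.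
rewrite comp_polyB comp_polyX comp_polyC expr0 addrK; congr (_ * _).
by apply: eq_bigr => i _; rewrite comp_polyB comp_polyX comp_polyC polyCB addrA.
Qed.

Lemma prod_one_sub_prim_expr : \prod_(1 <= i < n) (1 - z ^+ i) = n%:R.
Proof.
have := congr1 (fun p : {poly C} => p`_1) factor_XD1n_sub_1.
rewrite /= coefXM -horner_coef0 horner_prod coefB coef1 subr0.
rewrite coef_XD1_exp bin1 => <-.
by apply: eq_bigr => i _; rewrite hornerD hornerX hornerC add0r.
Qed.

Definition zinv i : C := (1 - z ^+ i)^-1.

Lemma esym_gen_zinv : n%:R *: esym_gen n zinv 1 * 'X = ('X + 1) ^+ n - 1.
Proof.
rewrite -factor_XD1n_sub_1 mulrC -prod_one_sub_prim_expr -scaler_prod.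
congr (_ * _); rewrite !big_nat; apply: eq_bigr => i /one_sub_prim_expr_neq0 nz_i.
by rewrite scalerDr scalerA mulfV // scale1r addrC alg_polyC.
Qed.

Lemma coef_esym_gen_zinv k : (esym_gen n zinv 1)`_k = 'C(n, k.+1)%:R / n%:R.
Proof.
have := congr1 (fun p : {poly C} => p`_k.+1) esym_gen_zinv.
rewrite /= coefMX coefZ coefB coef1 subr0.
rewrite coef_XD1_exp => <-.
by rewrite mulrC mulKf.
Qed.

Lemma coef_esym_gen_zinv_sqr m :
  (esym_gen n (fun i => zinv i ^+ 2) 1)`_m
  = ('C(n, m.+1)%:R + 2 * (-1) ^+ m * 'C(n, m.*2.+2)%:R) / n%:R ^+ 2.
Proof.
set P := esym_gen n zinv 1; set Q := esym_gen n _ 1.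
have coef_even (p : {poly C}) k : (p \Po 'X ^+ 2)`_k.*2 = p`_k.
  by rewrite coef_comp_poly_Xn // -mul2n dvdn_mulr // mulKn.
have negXD1_comp : ((-1) *: 'X + 1) ^+ n - 1 = (('X + 1) ^+ n - 1) \Po ((-1) *: 'X)
    :> {poly C}.
  by rewrite comp_polyB comp_polyC (rmorphXn (comp_poly _)) /= comp_polyD comp_polyX comp_polyC.
have sqr_comp : ('X + 1) * ((-1) *: 'X + 1) = ((-1) *: 'X + 1) \Po 'X ^+ 2 :> {poly C}.
  rewrite comp_polyD comp_polyZ comp_polyX comp_polyC -!mul_polyC; ring.
have key : (('X + 1) ^+ n - 1) * (((-1) *: 'X + 1) ^+ n - 1)
    = - (n%:R ^+ 2) *: (((Q \Po ((-1) *: 'X)) \Po 'X ^+ 2) * 'X ^+ 2).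
  rewrite negXD1_comp -esym_gen_zinv -comp_polyA comp_polyZ comp_polyX !scaleN1r.
  rewrite /Q esym_gen_sqr_comp -/P scaleN1r comp_polyM comp_polyZ comp_polyX -!mul_polyC polyCN polyC_exp.
  by ring.
have := congr1 (fun p : {poly C} => p`_(m.+1).*2) key.
rewrite /= mulrBl !mulrBr mul1r !mulr1 -exprMn sqr_comp -rmorphXn !coefB !coef_even coef1.
rewrite coefZ coefMXn doubleS !ltnS ltn0 !subSS subn0 coef_even coef_comp_scaleX subr0.
rewrite coef_XD1_exp !coef_scaleXD1_exp.
have -> : (-1) ^+ m.*2.+2 = 1 :> C by rewrite -signr_odd /= odd_double.
rewrite mul1r exprS mulN1r; set s := (-1) ^+ m => coef_eq.
have ss : s * s = 1 by rewrite -expr2 sqrr_sign.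
have n2_neq0 : n%:R ^+ 2 != 0 :> C by rewrite expf_neq0.
have sq : n%:R ^+ 2 * (s * Q`_m) = s * 'C(n, m.+1)%:R + 2 * 'C(n, m.*2.+2)%:R.
  by rewrite -[LHS]opprK -mulNr -coef_eq; ring.
apply: (mulfI n2_neq0); rewrite [RHS]mulrC divfK // -[Q`_m](signrMK m) mulrCA sq.
by rewrite mulrDr mulrA ss mul1r mulrCA mulrA.
Qed.

Lemma prod_zinv : \prod_(1 <= i < n) zinv i = n%:R^-1.
Proof. by rewrite /zinv prodfV prod_one_sub_prim_expr. Qed.

End PrimitiveRoot.

Section Zeta.
Variable R : realType.

Lemma zeta_exp (n k : nat) :
  zeta R n ^+ k = (cos ((2 * pi / n%:R) *+ k) +i* sin ((2 * pi / n%:R) *+ k))%C.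
Proof.
elim: k => [|k IHk]; first by rewrite !mulr0n cos0 sin0.
rewrite exprSr IHk /zeta; apply/eqP; rewrite eq_complex /=.
by rewrite !(mulrSr (2 * pi / n%:R) k) cosD sinD eqxx /= addrC.
Qed.

Lemma cos_lt1 (t : R) : 0 < t -> t < pi *+ 2 -> cos t < 1.
Proof.
move=> t_gt0 t_lt2pi; have [le_t_pi|lt_pi_t] := leP t pi.
  by rewrite -cos0 ltr_cos ?in_itv /= ?lexx ?pi_ge0 ?(ltW t_gt0).
rewrite -cosN -(cosD2pi (- t)) -cos0 ltr_cos ?in_itv /= ?lexx ?pi_ge0 //.
- by rewrite mulr2n; lra.
- by rewrite mulr2n; apply/andP; split; lra.
Qed.

Lemma zeta_primitive (n : nat) : (0 < n)%N -> n.-primitive_root (zeta R n).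
Proof.
move=> n_gt0; apply/andP; split => //; apply/forallP => i; apply/eqP.
rewrite unity_rootE zeta_exp.
have n_neq0 : n%:R != 0 :> R by rewrite pnatr_eq0 -lt0n.
have [->|ne_in] := eqVneq i.+1 n.
  by rewrite -mulr_natr divfK // mulr_natl cos2pi sin2pi; apply/eqP.
have lt_in : (i.+1 < n)%N by move: (ltn_ord i) ne_in; lia.
apply/negbTE; rewrite eq_complex /= negb_and lt_eqF // cos_lt1 //.
  by rewrite -mulr_natr !mulr_gt0 ?invr_gt0 ?ltr0n ?pi_gt0.
have frac_lt1 : (i.+1)%:R / n%:R < 1 :> R by rewrite ltr_pdivrMr ?ltr0n // mul1r ltr_nat.
have frac_gt0 : 0 < (i.+1)%:R / n%:R :> R by rewrite divr_gt0 ?ltr0n.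
have -> : 2 * pi / n%:R *+ i.+1 = (pi *+ 2) * ((i.+1)%:R / n%:R) :> R.
  by rewrite -mulr_natr mulr2n; field.
by have := pi_gt0 R; rewrite mulr2n; nra.
Qed.

Variable n : nat.

Lemma Zaux_zsum s lo : Zaux R n s lo = zsum (zinv (zeta R n)) n s lo.
Proof.
by elim: s lo => [|a s IHs] lo //=; apply: eq_bigr => i _; rewrite IHs /zinv exprVn.
Qed.

Lemma calY_ysum s : calY R n s = ysum (zinv (zeta R n)) n 1 s.
Proof. by apply: eq_bigr => t _; rewrite /frakZ Zaux_zsum. Qed.

Lemma calYb3_ysum3 (r p q : int) :
  calYb R n [:: (3%N, r); (2%N, p); (1%N, q)] = ysum3 (zinv (zeta R n)) n 1 q p r.
Proof. by case: r p q => [a|a] [b|b] [c|c]; rewrite /calYb //= calY_ysum cats0. Qed.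

Lemma calYb2_ysum3 (p q : int) :
  calYb R n [:: (2%N, p); (1%N, q)] = ysum3 (zinv (zeta R n)) n 1 q p 0.
Proof. by case: p q => [b|b] [c|c]; rewrite /calYb //= calY_ysum cats0. Qed.

End Zeta.

Theorem theorem3 (R : realType) (n m l : nat) (hlm : (l <= m)%N) (hmn : (m <= n - 1)%N) (hn : (1 <= n)%N) :
  calYb R n [:: (2%N, (m%:Z - l%:Z)); (1%N, l%:Z)]
  + n%:R * \sum_(0 <= j < n - m - 1)
      calYb R n [:: (3%N, (m%:Z - l%:Z + 1 + j%:Z)); (2%N, (l%:Z - 1 - j%:Z));
                  (1%N, (n%:Z - m%:Z - 2 - j%:Z))]
  = (n * (m + 1))%:R^-1
    * ('C(n - 1, m)%:R + (-1) ^+ m * 'C(n - 1, 2 * m + 1)%:R)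
    * 'C(n, l)%:R.
Proof.
have prim_z := zeta_primitive R hn; have n_neq0 := prim_root_natf_neq0 prim_z.
rewrite calYb2_ysum3; under eq_bigr do rewrite calYb3_ysum3.
set A := ysum3 _ _ _ _ _ 0; set S := \sum_(_ <= _ < _) _.
have lmn : (l <= m < n)%N by lia.
have := esymM_sqr_split (zinv (zeta R n)) lmn.
rewrite -/A -/S prod_zinv // /esym coef_esym_gen_zinv // coef_esym_gen_zinv_sqr //.
rewrite (_ : (n - 1 - l).+1 = n - l)%N ?bin_sub; [move=> split_eq | lia | lia].
rewrite -[S](addKr (n%:R^-1 * A)) -split_eq.
have bin_sub1 (k : nat) : 'C(n - 1, k)%:R = k.+1%:R * 'C(n, k.+1)%:R / n%:R :> R[i].
  by rewrite -natrM -mul_bin_diag subn1 natrM mulrC mulKf.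
rewrite (bin_sub1 m) (bin_sub1 (2 * m + 1)%N) (_ : (2 * m + 1).+1 = m.*2.+2)%N; last by lia.
rewrite -doubleS -mul2n !natrM addn1; field.
by rewrite n_neq0 addrC natr1 pnatr_eq0.
Qed.
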